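(* Let $G$ be a graph with $n$ vertices, and let $A$ be the set of paths of length $2$ in $G$ that are not contained in any cycle of length at least $4$ in $G$. Then \[\sum_{xyz\in A}\frac1{\deg y}<\frac{3n}2,\] where the sum is over unlabeled paths (each path $xyz=zyx$ counted once) and $\deg y$ is the degree in $G$ of the middle vertex $y$. *)

From mathcomp Require Import all_boot all_order all_algebra.
Set Implicit Arguments. Unset Strict Implicit. Unset Printing Implicit Defensive.
Import Order.TTheory GRing.Theory Num.Theory.

(* A (finite simple) graph: vertex type T : finType with a symmetric,
   irreflexive adjacency relation e. *)

Definition deg (T : finType) (e : rel T) (y : T) : nat := #|[set w | e y w]|.

Definition path2 (T : finType) (e : rel T) (x y z : T) : bool :=
  [&& e x y, e y z & x != z].

(* Up to rotation and
   reversal of the cycle, it can be written starting with x, y, z. *)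
Definition in_long_cycle (T : finType) (e : rel T) (x y z : T) : Prop :=
  exists rest : seq T,
    [/\ 4 <= size [:: x, y, z & rest], uniq [:: x, y, z & rest]
      & cycle e [:: x, y, z & rest]].

Definition inA (T : finType) (e : rel T) (t : T * T * T) : Prop :=
  let: (x, y, z) := t in path2 e x y z /\ ~ in_long_cycle e x y z.

From mathcomp Require Import all_boot all_order all_algebra.
From mathcomp Require Import classical_sets boolp.
From mathcomp Require Import lra.
Import Order.TTheory GRing.Theory Num.Theory.
Set Implicit Arguments. Unset Strict Implicit. Unset Printing Implicit Defensive.

(* If xyz lies on no cycle of length at least 4, then x and z are disconnected
   in G - y - xz ([avoid y x z]), and xyz can be oriented so that x lies in
   the smaller component; every unlabeled path of A thus has an orientation
   counted in the sum over oriented paths.  Fix x.  If xy1z1 and xy2z2 are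
   oriented with y1 <> y2 and z1 <> y2, z2 <> y1, the component of z1 in
   G - y1 - xz1 sits strictly inside the component of x in G - y2 - xz2 and
   vice versa, which together with the orientation gives a cyclic chain of
   strict inequalities.  Hence at most two middles y occur after x, and if
   two occur one carries a single path.  As fewer than deg y paths xyz start
   with xy, the contribution of x is below 1 + 1/2. *)

Lemma connect_sub_from (T : finType) (e e' : rel T) (u : T) :
  (forall a b, connect e u a -> e a b -> e' a b) ->
  forall w, connect e u w -> connect e' u w.
Proof.
move=> sub_e _ /connectP[p e_p ->].
suff: forall v, connect e u v -> path e v p -> connect e' v (last v p).
  by apply; rewrite ?connect0.
elim: p {e_p} => [|a p IHp] v uv /=; first by rewrite connect0.
case/andP=> eva e_p; apply: connect_trans (connect1 (sub_e _ _ uv eva)) _.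
exact: IHp (connect_trans uv (connect1 eva)) e_p.
Qed.

Lemma card_gt1_neq (T : finType) (A : {pred T}) (a : T) :
  1 < #|A| -> exists2 z, z \in A & z != a.
Proof.
case/card_gt1P=> [u [v [uA vA uv]]].
by case: (eqVneq u a) => [<-|]; [exists v; rewrite // eq_sym | exists u].
Qed.

Section RealBounds.
Local Open Scope ring_scope.

Lemma ler_sum_cover (R : numDomainType) (I : finType) (r : I -> I)
    (P Q : pred I) (F : I -> R) :
  injective r -> (forall i, F (r i) = F i) -> (forall i, 0 <= F i) ->
  (forall i, P i -> Q i || Q (r i)) ->
  \sum_(i | P i) F i <= 2 * \sum_(i | Q i) F i.
Proof.
move=> r_inj Fr F_ge0 PQ.
rewrite mulr_natl mulr2n [X in _ <= _ + X](reindex_inj r_inj).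
under [X in _ <= _ + X]eq_bigr do rewrite Fr.
rewrite big_mkcond [X in _ <= X + _]big_mkcond [X in _ <= _ + X]big_mkcond -big_split.
apply: ler_sum => i _; have F0 := F_ge0 i.
case: ifP => [/PQ/orP[] -> | _]; first by rewrite lerDl; case: ifP.
  by rewrite lerDr; case: ifP.
by rewrite addr_ge0 //; case: ifP.
Qed.

Lemma natr_div_lt1 (R : numFieldType) (c d : nat) : (c < d)%N -> c%:R / d%:R < 1 :> R.
Proof.
move=> cd; have d_gt0 : (0 < d)%N by apply: leq_ltn_trans cd.
by rewrite ltr_pdivrMr ?ltr0n // mul1r ltr_nat.
Qed.

Lemma natr_div_le_half (R : numFieldType) (c d : nat) :
  (c <= 1)%N -> (c < d)%N -> c%:R / d%:R <= 2^-1 :> R.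
Proof.
case: c => [_ _|[|//] _ d_gt1]; first by rewrite mul0r invr_ge0 ler0n.
by rewrite mul1r lef_pV2 ?posrE ?ltr0n ?(ltnW d_gt1) // ler_nat.
Qed.

Lemma sum_lt_three_halves (R : realFieldType) (I : finType) (S : {set I}) (h : I -> R) :
  (#|S| <= 2)%N -> (forall i, i \notin S -> h i = 0) -> {in S, forall i, h i < 1} ->
  {in S &, forall i j, i != j -> (h i <= 2^-1) || (h j <= 2^-1)} ->
  \sum_i h i < 3%:R / 2%:R.
Proof.
move=> S_le2 h0 h_lt1 h_half.
rewrite (bigID (mem S)) /= [X in _ + X]big1 ?addr0; last by move=> i /h0.
move: S_le2; rewrite leq_eqVlt ltnS leq_eqVlt ltnS leqn0.
case/or3P=> [/cards2P[a [b [ab S_ab]]] | /cards1P[a S_a] | /eqP/cards0_eq ->].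
- have aS : a \in S by rewrite S_ab !inE eqxx.
  have bS : b \in S by rewrite S_ab !inE eqxx orbT.
  rewrite S_ab big_setU1 ?inE //= big_set1.
  have := h_lt1 a aS; have := h_lt1 b bS.
  by case/orP: (h_half a b aS bS ab) => ? ? ?; lra.
- have aS : a \in S by rewrite S_a set11.
  by rewrite S_a big_set1; have := h_lt1 a aS; lra.
- by rewrite big_set0; lra.
Qed.

End RealBounds.

Section Separation.

Variables (T : finType) (e : rel T).
Hypotheses (e_sym : symmetric e) (e_irr : irreflexive e).

Lemma edge_neq a b : e a b -> a != b.
Proof. by apply: contraTneq => ->; rewrite e_irr. Qed.

Definition avoid (y x z : T) : rel T :=
  fun a b => [&& e a b, a != y, b != y &
                 ~~ (((a == x) && (b == z)) || ((a == z) && (b == x)))].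

Definition avoid_comp (y x z u : T) : {set T} :=
  [set w | connect (avoid y x z) u w].

Definition separated (x y z : T) : bool :=
  path2 e x y z && ~~ connect (avoid y x z) x z.

(* Orient each separated path so that its first endpoint lies in the smaller
   component; ties keep both orientations. *)
Definition good (x y z : T) : bool :=
  separated x y z && (#|avoid_comp y x z x| <= #|avoid_comp y x z z|).

Definition good_count (x y : T) : nat := #|[set z | good x y z]|.

Lemma avoidC y x z : avoid y x z =2 avoid y z x.
Proof. by move=> a b; rewrite /avoid orbC. Qed.

Lemma avoid_sym y x z : symmetric (avoid y x z).
Proof.
move=> a b; rewrite /avoid e_sym orbC [(b == x) && _]andbC [(b == z) && _]andbC.
by case: (a == y); case: (b == y).
Qed.

Lemma connect_avoidC y x z a b :
  connect (avoid y x z) a b = connect (avoid y x z) b a.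
Proof. exact: (sym_connect_sym (avoid_sym y x z)). Qed.

Lemma connect_avoid_neq y x z u w :
  connect (avoid y x z) u w -> u != y -> w != y.
Proof.
have cl: closed (avoid y x z) [pred v | v != y].
  by move=> a b /and4P[_ ay b_y _]; rewrite !inE ay b_y.
by move=> /(closed_connect cl); rewrite !inE => ->.
Qed.

Lemma in_long_cycle_of_connect_avoid x y z :
  path2 e x y z -> connect (avoid y x z) x z -> in_long_cycle e x y z.
Proof.
case/and3P=> exy eyz xz /connectP[p0 p0_path p0_z].
case/shortenP: p0_path p0_z => p p_path p_uniq _ {p0}.
case/lastP: p p_path p_uniq => [|q a]; first by move=> _ _ zx; rewrite zx /= eqxx in xz.
rewrite last_rcons => p_path p_uniq za; subst a.
have q_ne0 : q != [::].
  by apply: contraTneq p_path => ->; rewrite /= /avoid !eqxx /= !andbF.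
have yNq : y \notin q.
  apply/negP=> yq; have /connect_avoid_neq : connect (avoid y x z) x y.
    by apply: (path_connect p_path); rewrite inE mem_rcons inE yq !orbT.
  by move/(_ (edge_neq exy)); rewrite eqxx.
move: p_uniq; rewrite /= mem_rcons inE rcons_uniq negb_or => /and3P[/andP[_ xNq] zNq q_uniq].
exists (rev q); split.
- by rewrite /= size_rev; case: (q) q_ne0.
- rewrite /= !inE !mem_rev rev_uniq !negb_or xNq yNq zNq q_uniq xz.
  by rewrite !edge_neq.
- rewrite /cycle /= exy eyz -rev_cons -(belast_rcons x q z) -{1}(last_rcons x q z) rev_path.
  by apply: sub_path p_path => a b /and4P[eab _ _ _]; rewrite e_sym.
Qed.

Lemma avoid_compC y x z u : avoid_comp y z x u = avoid_comp y x z u.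
Proof. by apply/setP => w; rewrite !inE (eq_connect (avoidC y x z)). Qed.

Lemma separated_of_inA x y z : inA e (x, y, z) -> separated x y z.
Proof.
case=> xyz Ncycle; rewrite /separated xyz; apply/negP => xz.
exact: Ncycle (in_long_cycle_of_connect_avoid xyz xz).
Qed.

Lemma separatedC x y z : separated x y z -> separated z y x.
Proof.
case/andP=> /and3P[exy eyz xz] Nxz.
rewrite /separated /path2 e_sym eyz e_sym exy eq_sym xz /=.
by rewrite -(eq_connect (avoidC y x z)) connect_avoidC.
Qed.

Lemma good_of_inA x y z : inA e (x, y, z) -> good x y z || good z y x.
Proof.
move=> /separated_of_inA xyz.
by rewrite /good xyz (separatedC xyz) /= !(avoid_compC y x z) leq_total.
Qed.

Lemma separated_common_nbr x y z w : separated x y z -> e x w -> e w z -> w = y.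
Proof.
case/andP=> /and3P[exy eyz xz] Nxz exw ewz; apply/eqP; apply: contraNT Nxz => wy.
have wz := edge_neq ewz; have wx : w != x by rewrite eq_sym edge_neq.
apply: (@connect_trans _ _ w); apply: connect1.
  by rewrite /avoid exw wy edge_neq // (negbTE wz) (negbTE xz) !andbF.
by rewrite /avoid ewz wy eq_sym edge_neq // (negbTE wx) (negbTE wz).
Qed.

(* The component of z1 in G - y1 - xz1 misses x and its neighbour y2, so it
   survives in G - y2 - xz2, where it is joined to x through y1. *)
Lemma card_avoid_comp_lt x y1 z1 y2 z2 :
  separated x y1 z1 -> e x y2 -> x != z2 -> y1 != y2 -> z1 != y2 -> z2 != y1 ->
  #|avoid_comp y1 x z1 z1| < #|avoid_comp y2 x z2 x|.
Proof.
case/andP=> /and3P[exy1 ey1z1 xz1] Nxz1 exy2 xz2 y12 z1y2 z2y1.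
set r1 := avoid y1 x z1; set r2 := avoid y2 x z2.
have r1xy2 : r1 x y2.
  by rewrite /r1 /avoid exy2 edge_neq // eq_sym y12 (eq_sym y2) (negbTE z1y2) (negbTE xz1) andbF.
have far_z1 v : connect r1 x v -> ~~ connect r1 z1 v.
  by move=> xv; apply: contra Nxz1 => z1v; rewrite (connect_trans xv) // connect_avoidC.
have r2xy1 : r2 x y1.
  by rewrite /r2 /avoid exy1 edge_neq // y12 (eq_sym y1) (negbTE z2y1) (negbTE xz2) andbF.
have r2y1z1 : r2 y1 z1.
  rewrite /r2 /avoid ey1z1 y12 z1y2 (eq_sym y1 x) (eq_sym y1 z2) (negbTE z2y1).
  by rewrite (negbTE (edge_neq exy1)).
apply: proper_card; apply/properP; split.
  apply/fintype.subsetP => w; rewrite !inE => z1w.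
  apply: connect_trans (connect_trans (connect1 r2xy1) (connect1 r2y1z1)) _.
  apply: connect_sub_from z1w => a b z1a r1ab.
  have z1b := connect_trans z1a (connect1 r1ab).
  have Nx v : connect r1 z1 v -> v != x.
    by apply: contraTneq => ->; exact: far_z1 (connect0 _ _).
  have Ny2 v : connect r1 z1 v -> v != y2.
    by apply: contraTneq => ->; exact: far_z1 (connect1 r1xy2).
  case/and4P: r1ab => eab _ _ _.
  by rewrite /r2 /avoid eab !Ny2 // (negbTE (Nx _ z1a)) (negbTE (Nx _ z1b)) andbF.
exists y1; rewrite !inE; first exact: connect1.
by apply/negP => /connect_avoid_neq; rewrite eq_sym edge_neq // eqxx => /(_ isT).
Qed.

Lemma good_pair_end_mid x y1 z1 y2 z2 :
  good x y1 z1 -> good x y2 z2 -> y1 != y2 -> (z1 == y2) || (z2 == y1).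
Proof.
case/andP=> xyz1 le1 /andP[xyz2 le2] y12.
apply/negPn/negP; rewrite negb_or => /andP[z1y2 z2y1].
have [/and3P[exy1 _ xz1] _] := andP xyz1; have [/and3P[exy2 _ xz2] _] := andP xyz2.
have lt1 := card_avoid_comp_lt xyz1 exy2 xz2 y12 z1y2 z2y1.
have y21 : y2 != y1 by rewrite eq_sym.
have lt2 := card_avoid_comp_lt xyz2 exy1 xz1 y21 z2y1 z1y2.
by have := ltn_trans (leq_ltn_trans le1 lt1) (leq_ltn_trans le2 lt2); rewrite ltnn.
Qed.

Lemma good_edge x y z : good x y z -> e x y.
Proof. by case/andP=> /andP[/and3P[]]. Qed.

Lemma good_chain x y1 y2 y3 : good x y1 y2 -> good x y2 y3 -> e x y3 -> y3 = y1.
Proof.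
case/andP=> xyz _ /andP[/andP[/and3P[_ ey2y3 _] _] _] exy3.
by apply: separated_common_nbr xyz exy3 _; rewrite e_sym.
Qed.

Definition good_mids x : {set T} := [set y | 0 < good_count x y].

Lemma mem_good_mids x y : (y \in good_mids x) = [exists z, good x y z].
Proof.
rewrite inE card_gt0; apply/set0Pn/existsP => -[z]; rewrite ?inE => gz.
  by exists z.
by exists z; rewrite inE.
Qed.

Lemma card_good_mids_le2 x : #|good_mids x| <= 2.
Proof.
rewrite leqNgt; apply/card_gt2P => -[y1 [y2 [y3 [[m1 m2 m3] [y12 y23 y31]]]]].
move: m1 m2 m3; rewrite !mem_good_mids => /existsP[z1 g1] /existsP[z2 g2] /existsP[z3 g3].
have ex1 := good_edge g1; have ex2 := good_edge g2; have ex3 := good_edge g3.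
(* Reading [z_i = y_j] as an arc i -> j, every pair of middles carries an arc
   and no [i] has two out-arcs, so there is a path i -> j -> k with k != i,
   which good_chain forbids. *)
case/orP: (good_pair_end_mid g1 g2 y12) => /eqP E12;
case/orP: (good_pair_end_mid g2 g3 y23) => /eqP E23;
case/orP: (good_pair_end_mid g3 g1 y31) => /eqP E31; subst;
  rewrite ?eqxx in y12 y23 y31 => //.
- by move: y31; rewrite (good_chain g1 g2 ex3) eqxx.
- by move: y12; rewrite (good_chain g1 g3 ex2) eqxx.
Qed.

Lemma good_count_le1 x y1 y2 :
  y1 != y2 -> (good_count x y1 <= 1) || (good_count x y2 <= 1).
Proof.
move=> y12; case: leqP => //= c1; rewrite leqNgt; apply/negP => c2.
have [z1 g1 z1y2] := card_gt1_neq y2 c1; have [z2 g2 z2y1] := card_gt1_neq y1 c2.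
rewrite !inE in g1 g2.
by have := good_pair_end_mid g1 g2 y12; rewrite (negbTE z1y2) (negbTE z2y1).
Qed.

Lemma good_count_lt_deg x y : 0 < good_count x y -> good_count x y < deg e y.
Proof.
rewrite card_gt0 => /set0Pn[z]; rewrite inE => /good_edge exy.
apply: proper_card; apply/properP; split.
  by apply/fintype.subsetP => w; rewrite !inE => /andP[/andP[/and3P[]]].
exists x; first by rewrite inE e_sym.
by rewrite inE /good /separated /path2 eqxx !andbF.
Qed.

Local Open Scope ring_scope.

Lemma sum_good_inv_deg (R : fieldType) :
  \sum_(t : T * T * T | good t.1.1 t.1.2 t.2) (deg e t.1.2)%:R^-1
  = \sum_x \sum_y (good_count x y)%:R / (deg e y)%:R :> R.
Proof.
rewrite -(pair_big_dep xpredT (fun p z => good p.1 p.2 z) (fun p _ => (deg e p.2)%:R^-1)).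
rewrite pair_big; apply: eq_bigr => -[x y] _ /=.
rewrite (eq_bigl [in [set z | good x y z]]); last by move=> z; rewrite inE.
by rewrite sumr_const mulrC mulr_natr.
Qed.

Lemma sum_good_ratio_lt (R : realFieldType) x :
  \sum_y (good_count x y)%:R / (deg e y)%:R < 3%:R / 2%:R :> R.
Proof.
apply: (sum_lt_three_halves (card_good_mids_le2 x)).
- by move=> y; rewrite inE -eqn0Ngt => /eqP ->; rewrite mul0r.
- by move=> y; rewrite inE => /good_count_lt_deg; apply: natr_div_lt1.
- move=> y1 y2; rewrite !inE => c1 c2 /(good_count_le1 x)/orP[] le1; apply/orP.
    by left; apply: natr_div_le_half; rewrite ?good_count_lt_deg.
  by right; apply: natr_div_le_half; rewrite ?good_count_lt_deg.
Qed.

End Separation.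

Local Open Scope ring_scope.

Theorem proposition3p5 (R : realFieldType) (T : finType) (e : rel T)
  (e_sym : symmetric e) (e_irr : irreflexive e) (n_pos : (0 < #|T|)%N) :
  2^-1 * (\sum_(t : T * T * T | `[< inA e t >]) ((deg e t.1.2)%:R)^-1 : R)
    < 3%:R * (#|T|)%:R / 2%:R.
Proof.
pose f (t : T * T * T) : R := (deg e t.1.2)%:R^-1.
have cover : \sum_(t | `[< inA e t >]) f t <= 2 * \sum_(t | good e t.1.1 t.1.2 t.2) f t.
  apply: (ler_sum_cover (r := fun t => (t.2, t.1.2, t.1.1))) => //.
  - by move=> [[? ?] ?] [[? ?] ?] [-> -> ->].
  - by move=> t; rewrite invr_ge0 ler0n.
  - by move=> [[x y] z] /asboolP /(good_of_inA e_sym e_irr).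
have good_lt : \sum_(t | good e t.1.1 t.1.2 t.2) f t < 3%:R / 2%:R * #|T|%:R.
  rewrite sum_good_inv_deg mulr_natr -sumr_const; apply: ltr_sum => [|x _].
    by case/card_gt0P: n_pos => x _; apply/hasP; exists x; rewrite ?mem_index_enum.
  exact: sum_good_ratio_lt.
rewrite /f in cover good_lt; lra.
Qed.
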